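(* Let $a,n\in\mathbb{Z}^+$. Let $S=\mathbb{Z}[x]/(x^n-a)$ and for each $k\ge 0$ let $f_k(x)$ be the image of $(x+1)^k$ in $S$. Then $$\sqrt[n]{a} = \lim_{k\to\infty}\frac{f_{k+1}(1)}{f_k(1)} - 1 \quad\text{(in } \mathbb{R}).$$
   Context: The image of $(x+1)^k$ in $S$ is identified with its unique representative in $\mathbb{Z}[x]$ of degree less than $n$ (the remainder of $(x+1)^k$ upon division by $x^n-a$), and $f_k(1)$ denotes the evaluation of this representative at $x=1$; explicitly $f_k(1)=\sum_{j=0}^k\binom{k}{j}a^{\lfloor j/n\rfloor}$. $\sqrt[n]{a}$ denotes the positive real $n$-th root of $a$. *)

From HB Require Import structures.
From mathcomp Require Import all_boot all_order all_algebra.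
From mathcomp Require Import all_classical all_reals all_analysis.
Set Implicit Arguments. Unset Strict Implicit. Unset Printing Implicit Defensive.
Import Order.TTheory GRing.Theory Num.Theory.
Local Open Scope ring_scope.

(* f_k : the representative of degree < n of the image of (x+1)^k in
   S = Z[x]/(x^n - a), i.e. the remainder of (x+1)^k modulo the monic
   polynomial x^n - a. *)
Definition fk (a n k : nat) : {poly int} :=
  (('X + 1) ^+ k) %% ('X ^+ n - (a%:Z)%:P).

Definition fk1 (a n k : nat) : int := (fk a n k).[1].

(* Let x be the positive n-th root of a.  Since a ^ (j %/ n) = x ^ j / x ^ (j %% n),
   f_k(1) = \sum_j 'C(k, j) a ^ (j %/ n) = (1 + x) ^ k \sum_(r < n) x ^- r P(B_k = r mod n),
   where B_k is binomial with k trials of success probability q = x / (1 + x).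
   Since B_(k+1) is B_k or B_k + 1 with probabilities p = 1 - q and q, the least
   residue mass is nondecreasing, and within n - 1 steps every residue receives
   a share (p q) ^ (n - 1) of the excess of any residue over that minimum.  Hence
   all residue masses tend to 1 / n, the sum above converges to a positive
   limit, and f_(k+1)(1) / f_k(1) tends to 1 + x. *)

From HB Require Import structures.
From mathcomp Require Import all_boot all_order all_algebra.
From mathcomp Require Import all_classical all_reals all_analysis.
From mathcomp Require Import ring lra zify.
Set Implicit Arguments. Unset Strict Implicit. Unset Printing Implicit Defensive.
Import Order.TTheory GRing.Theory Num.Theory numFieldNormedType.Exports.
Local Open Scope classical_set_scope.
Local Open Scope ring_scope.

Lemma Xn_modp_XnsubC (R : idomainType) (c : R) n j : (0 < n)%N ->
  'X^j %% ('X^n - c%:P) = c ^+ (j %/ n) *: 'X^(j %% n).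
Proof.
move=> n_gt0; have ulc : lead_coef ('X^n - c%:P) \is a GRing.unit.
  by rewrite (monicP (monicXnsubC c n_gt0)) unitr1.
have [S XXE] : exists S, ('X^n) ^+ (j %/ n) - c%:P ^+ (j %/ n) = ('X^n - c%:P) * S.
  by eexists; apply: subrXX.
apply/esym/(Pdiv.IdomainUnit.modpP ulc (q := S * 'X^(j %% n))).
  rewrite mulrAC [S * _]mulrC -XXE -rmorphXn mulrBl -exprM -exprD.
  by rewrite mulnC -divn_eq mul_polyC subrK.
rewrite size_XnsubC // ltnS; apply: leq_trans (size_scale_leq _ _) _.
by rewrite size_polyXn ltn_pmod.
Qed.

Lemma fk1E a n k : (0 < n)%N ->
  fk1 a n k = \sum_(j < k.+1) ('C(k, j) * a ^ (j %/ n))%N%:Z.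
Proof.
move=> n_gt0; have ulc : lead_coef ('X^n - (a%:Z)%:P) \is a GRing.unit.
  by rewrite (monicP (monicXnsubC _ n_gt0)) unitr1.
rewrite /fk1 /fk exprD1n (big_morph _ (Pdiv.IdomainUnit.modpD ulc) (mod0p _)).
rewrite horner_sum; apply: eq_bigr => j _.
rewrite -scaler_nat (Pdiv.IdomainUnit.modpZl ulc) Xn_modp_XnsubC //.
by rewrite !hornerE expr1n /= mulr1 PoszM -!natz natrX.
Qed.

Lemma sum_by_residue (V : nmodType) n (F : nat -> nat -> V) m : (0 < n)%N ->
  \sum_(r < n) \sum_(0 <= j < m | (j %% n == r %% n)%N) F r j =
  \sum_(0 <= j < m) F (j %% n)%N j.
Proof.
move=> n_gt0; under eq_bigr do rewrite big_mkcond.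
rewrite exchange_big /=; apply: eq_bigr => j _.
rewrite (bigD1 (Ordinal (ltn_pmod j n_gt0))) //= modn_mod eqxx big1 ?addr0 //.
move=> i /negPf; rewrite (modn_small (ltn_ord i)).
by rewrite -val_eqE /= eq_sym => ->.
Qed.

Section ResidueMass.
Variables (R : realDomainType) (n : nat) (p q : R).
Hypotheses (n_gt0 : (0 < n)%N) (p_gt0 : 0 < p) (q_gt0 : 0 < q) (pq1 : p + q = 1).

Lemma mix_ge L x y : L <= x -> L <= y -> L <= p * x + q * y.
Proof.
move=> Lx Ly; have px : p * L <= p * x by rewrite ler_pM2l.
have qy : q * L <= q * y by rewrite ler_pM2l.
have : L = p * L + q * L by rewrite -mulrDl pq1 mul1r.
lra.
Qed.

Lemma mix_ge_gap L e x y : 0 <= e -> L <= x -> L <= y ->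
  L + e <= x \/ L + e <= y -> L + p * q * e <= p * x + q * y.
Proof.
move=> e_ge0 Lx Ly Le.
have pp : 0 <= p * p * e by rewrite !mulr_ge0 // ltW.
have qq : 0 <= q * q * e by rewrite !mulr_ge0 // ltW.
have Ep : p * q * e + p * p * e = p * e by rewrite -mulrDl -mulrDr addrC pq1 mulr1.
have Eq : p * q * e + q * q * e = q * e by rewrite -mulrDl (mulrC p) -mulrDr pq1 mulr1.
have EL : p * L + q * L = L by rewrite -mulrDl pq1 mul1r.
have px : p * L <= p * x by rewrite ler_pM2l.
have qy : q * L <= q * y by rewrite ler_pM2l.
case: Le => Le.
- have : p * (L + e) <= p * x by rewrite ler_pM2l.
  lra.
- have : q * (L + e) <= q * y by rewrite ler_pM2l.
  lra.
Qed.

Definition bin_weight k j : R := 'C(k, j)%:R * q ^+ j * p ^+ (k - j).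

Definition residue_mass k r : R :=
  \sum_(0 <= j < k.+1 | (j %% n == r %% n)%N) bin_weight k j.

Lemma bin_weightSS k j : bin_weight k.+1 j.+1 = p * bin_weight k j.+1 + q * bin_weight k j.
Proof.
rewrite /bin_weight binS natrD subSS; case: (ltnP j k) => [jk|kj].
  by rewrite -(subnSK jk) !exprS; ring.
by rewrite (@bin_small k j.+1) // !exprS; ring.
Qed.

Lemma bin_weightS0 k : bin_weight k.+1 0 = p * bin_weight k 0.
Proof. by rewrite /bin_weight !bin0 !subn0 exprS; ring. Qed.

Lemma bin_weight_small k j : (k < j)%N -> bin_weight k j = 0.
Proof. by move=> kj; rewrite /bin_weight bin_small // !mul0r. Qed.

Lemma bin_weight_ge0 k j : 0 <= bin_weight k j.
Proof. by rewrite /bin_weight !mulr_ge0 // exprn_ge0 // ltW. Qed.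

Lemma residue_mass_mod k r : residue_mass k (r %% n) = residue_mass k r.
Proof. by rewrite /residue_mass modn_mod. Qed.

Lemma residue_massDn k r : residue_mass k (r + n) = residue_mass k r.
Proof. by rewrite -residue_mass_mod modnDr residue_mass_mod. Qed.

Lemma residue_mass_ge0 k r : 0 <= residue_mass k r.
Proof. exact/sumr_ge0/(fun j _ => bin_weight_ge0 k j). Qed.

Lemma sum_residue_mass k : \sum_(r < n) residue_mass k r = 1.
Proof.
rewrite (@sum_by_residue _ n (fun _ => bin_weight k)) //.
have := exprDn p q k; rewrite pq1 expr1n => ->.
rewrite big_mkord; apply: eq_bigr => j _; rewrite /bin_weight -mulr_natl; ring.
Qed.

Lemma residue_massS k r :
  residue_mass k.+1 r = p * residue_mass k r + q * residue_mass k (r + n.-1).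
Proof.
have modS j r' : (j.+1 %% n == r' %% n)%N = (j %% n == (r' + n.-1) %% n)%N.
  by rewrite -(eqn_modDr 1 j) -addnA !addn1 prednK // modnDr.
rewrite /residue_mass !(big_mkcond (fun j => _ == _)) /=.
set w := fun k' r' j => if (j %% n == r' %% n)%N then bin_weight k' j else 0.
have shift r' : \sum_(0 <= j < k.+1) w k r' j = w k r' 0 + \sum_(0 <= j < k.+1) w k r' j.+1.
  by rewrite -big_nat_recl // [RHS]big_nat_recr //= /w bin_weight_small // if_same addr0.
rewrite big_nat_recl // shift mulrDr !mulr_sumr -addrA -big_split /=.
congr (_ + _); first by rewrite /w bin_weightS0; case: ifP => _; ring.
by apply: eq_bigr => j _; rewrite /w modS bin_weightSS; case: ifP => _; ring.
Qed.

Lemma residue_mass_le1 k r : residue_mass k r <= 1.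
Proof.
rewrite -(sum_residue_mass k) -residue_mass_mod.
rewrite (bigD1 (Ordinal (ltn_pmod r n_gt0))) //= lerDl.
exact/sumr_ge0/(fun i _ => residue_mass_ge0 k i).
Qed.

Lemma residue_mass_lbS k L : (forall r, L <= residue_mass k r) ->
  forall r, L <= residue_mass k.+1 r.
Proof. by move=> lb r; rewrite residue_massS mix_ge. Qed.

Lemma residue_mass_lbD k L t : (forall r, L <= residue_mass k r) ->
  forall r, L <= residue_mass (k + t) r.
Proof.
move=> lb; elim: t => [|t IH] r; first by rewrite addn0.
by rewrite addnS residue_mass_lbS.
Qed.

Lemma residue_mass_spread k L r0 t s : (forall r, L <= residue_mass k r) ->
  (s <= t)%N ->
  L + (p * q) ^+ t * (residue_mass k r0 - L) <= residue_mass (k + t) (r0 + s).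
Proof.
move=> lb; have gap_ge0 : 0 <= residue_mass k r0 - L by rewrite subr_ge0.
elim: t s => [|t IH] s.
  by rewrite leqn0 => /eqP->; rewrite expr0 mul1r !addn0 addrC subrK.
rewrite addnS residue_massS exprSr mulrAC [_ * (p * q)]mulrC.
move=> s_le; apply: mix_ge_gap; try exact: residue_mass_lbD.
  by rewrite mulr_ge0 // exprn_ge0 // mulr_ge0 // ltW.
case: s s_le => [_|s s_le_t]; first by left; apply: IH.
right; rewrite (_ : (r0 + s.+1 + n.-1 = r0 + s + n)%N); last by lia.
by rewrite residue_massDn; apply: IH.
Qed.

Definition min_mass k : R := \big[Order.min/residue_mass k 0]_(r < n) residue_mass k r.

Lemma min_mass_le k r : min_mass k <= residue_mass k r.
Proof.
rewrite -residue_mass_mod.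
exact: (bigmin_le _ (Ordinal (ltn_pmod r n_gt0)) (fun i : 'I_n => residue_mass k i)).
Qed.

Lemma le_min_mass k L : (forall r, L <= residue_mass k r) -> L <= min_mass k.
Proof. by move=> lb; apply: le_bigmin. Qed.

Lemma min_massS k : min_mass k <= min_mass k.+1.
Proof. exact/le_min_mass/residue_mass_lbS/min_mass_le. Qed.

Lemma min_mass_le1 k : min_mass k <= 1.
Proof. exact: le_trans (min_mass_le k 0) (residue_mass_le1 k 0). Qed.

Lemma min_mass_spread k r0 : (r0 < n)%N ->
  min_mass k + (p * q) ^+ n.-1 * (residue_mass k r0 - min_mass k) <= min_mass (k + n.-1).
Proof.
move=> r0_lt_n; apply: le_min_mass => r.
pose s := ((r + n - r0) %% n)%N.
have s_le : (s <= n.-1)%N by rewrite -ltnS prednK // ltn_pmod.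
have r0s_mod : ((r0 + s) %% n = r %% n)%N.
  by rewrite modnDmr (_ : (r0 + (r + n - r0) = r + n)%N) ?modnDr //; lia.
rewrite -(residue_mass_mod _ r) -r0s_mod residue_mass_mod.
exact: residue_mass_spread (min_mass_le k) s_le.
Qed.
End ResidueMass.

Lemma cvgn_sum (R : numFieldType) (V : normedModType R) m (u : 'I_m -> nat -> V)
    (l : 'I_m -> V) :
  (forall i, u i @ \oo --> l i) ->
  (fun k => \sum_(i < m) u i k) @ \oo --> \sum_(i < m) l i.
Proof. by move=> u_cvg; apply: (@cvg_big _ _ +%R 0 predT add_continuous). Qed.

Lemma cvgn_ratio_succ (R : numFieldType) (W : R ^nat) (L : R) : L != 0 ->
  W @ \oo --> L -> (fun k => W k.+1 / W k) @ \oo --> (1 : R).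
Proof.
move=> L_neq0 W_cvg; rewrite -(divff L_neq0).
by apply: cvgM; [rewrite cvg_shiftS | apply: cvgV].
Qed.

Lemma exprn_powR_invn (R : realType) (a : R) n : 0 <= a -> (0 < n)%N ->
  (a `^ n%:R^-1) ^+ n = a.
Proof.
move=> a_ge0 n_gt0; rewrite -powR_mulrn ?powR_ge0 // -powRrM mulVf ?powRr1 //.
by rewrite pnatr_eq0 -lt0n.
Qed.

Section ResidueMassLimit.
Variables (R : realType) (n : nat) (p q : R).
Hypotheses (n_gt0 : (0 < n)%N) (p_gt0 : 0 < p) (q_gt0 : 0 < q) (pq1 : p + q = 1).

Local Notation U := (residue_mass n p q).
Local Notation mu := (min_mass n p q).

Lemma residue_mass_cvg_common :
  exists l : R, forall r, (r < n)%N -> (fun k => U k r) @ \oo --> l.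
Proof.
have mu_nd : nondecreasing_seq mu.
  by apply/nondecreasing_seqP => k; apply: min_massS.
have mu_ub : has_ubound (range mu).
  by exists 1 => _ [k _ <-]; apply: min_mass_le1.
have := nondecreasing_cvgn mu_nd mu_ub; set l := sup _ => mu_cvg.
exists l => r r_lt_n.
pose d := (p * q) ^+ n.-1.
have d_gt0 : 0 < d by rewrite exprn_gt0 // mulr_gt0.
have gap_cvg : (fun k => (mu (k + n.-1)%N - mu k) / d) @ \oo --> 0.
  rewrite -(mul0r d^-1) -(subrr l); apply: cvgM; last exact: cvg_cst.
  by apply: cvgB => //; rewrite (cvg_shiftn n.-1 mu).
have U_mu_cvg : (fun k => U k r - mu k) @ \oo --> 0.
  apply: (squeeze_cvgr _ (cvg_cst 0) gap_cvg); apply: nearW => k /=.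
  rewrite subr_ge0 min_mass_le //= ler_pdivlMr //.
  have := min_mass_spread n_gt0 p_gt0 q_gt0 pq1 k r_lt_n; rewrite -/d; lra.
rewrite -[l]add0r (_ : (fun k => U k r) = (fun k => U k r - mu k) + mu).
  exact: cvgD.
by apply: funext => k; rewrite /= subrK.
Qed.

Lemma residue_mass_cvg r : (r < n)%N -> (fun k => U k r) @ \oo --> (n%:R^-1 : R).
Proof.
have [l U_cvg] := residue_mass_cvg_common.
suff -> : n%:R^-1 = l :> R by apply: U_cvg.
have sum_cvg : (fun=> 1) @ \oo --> \sum_(r < n) l.
  rewrite (_ : (fun=> 1) = fun k => \sum_(r < n) U k r).
    by apply: cvgn_sum => i; apply: U_cvg.
  by apply: funext => k; rewrite sum_residue_mass.
have ln1 : l * n%:R = 1.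
  rewrite sumr_const card_ord in sum_cvg.
  by rewrite mulr_natr -(cvg_lim (@Rhausdorff R) sum_cvg) lim_cst.
have n_neq0 : n%:R != 0 :> R by rewrite pnatr_eq0 -lt0n.
by apply: (mulIf n_neq0); rewrite mulVf.
Qed.

Lemma weighted_residue_mass_cvg (c : nat -> R) :
  (fun k => \sum_(r < n) c r * U k r) @ \oo --> (n%:R^-1 * \sum_(r < n) c r : R).
Proof.
rewrite mulr_sumr; apply: cvgn_sum => i.
by rewrite mulrC; apply: cvgMr; apply: residue_mass_cvg.
Qed.

End ResidueMassLimit.


Definition weighted_mass (R : realFieldType) n (x : R) k : R :=
  \sum_(r < n) x ^- r * residue_mass n (1 + x)^-1 (x / (1 + x)) k r.

Lemma weighted_mass_cvg (R : realType) n (x : R) : (0 < n)%N -> 0 < x ->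
  weighted_mass n x @ \oo --> (n%:R^-1 * \sum_(r < n) x ^- r : R).
Proof.
move=> n_gt0 x_gt0; have x1_gt0 : 0 < 1 + x by rewrite addr_gt0.
have p_gt0 : 0 < (1 + x)^-1 by rewrite invr_gt0.
have q_gt0 : 0 < x / (1 + x) by rewrite divr_gt0.
have pq1 : (1 + x)^-1 + x / (1 + x) = 1 by field; rewrite gt_eqF.
exact: (@weighted_residue_mass_cvg _ _ _ _ n_gt0 p_gt0 q_gt0 pq1 (fun r => x ^- r)).
Qed.

Lemma bin_weight_geometric (R : realFieldType) (x : R) k j :
  1 + x != 0 -> (j <= k)%N ->
  (1 + x) ^+ k * bin_weight (1 + x)^-1 (x / (1 + x)) k j = 'C(k, j)%:R * x ^+ j.
Proof.
move=> x1_neq0 jk; rewrite /bin_weight -(subnKC jk) exprD addKn expr_div_n exprVn.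
by field; rewrite !expf_neq0.
Qed.

Section Fk1.
Variables (R : realFieldType) (a n : nat) (x : R).
Hypotheses (n_gt0 : (0 < n)%N) (x_gt0 : 0 < x) (xXn : x ^+ n = a%:R).

Lemma fk1_weighted_mass k : (fk1 a n k)%:~R = (1 + x) ^+ k * weighted_mass n x k.
Proof.
have x1_neq0 : 1 + x != 0 by rewrite gt_eqF ?addr_gt0.
rewrite fk1E // rmorph_sum mulr_sumr.
under [RHS]eq_bigr do rewrite /residue_mass !mulr_sumr.
rewrite (@sum_by_residue _ n (fun r j => (1 + x) ^+ k * (x ^- r * bin_weight _ _ k j))) //.
rewrite big_mkord; apply: eq_bigr => j _.
rewrite mulrCA (@bin_weight_geometric _ x k j x1_neq0 (ltn_ord j)).
have xXj : x ^+ j = a%:R ^+ (j %/ n) * x ^+ (j %% n).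
  by rewrite -xXn -exprM -exprD mulnC -divn_eq.
rewrite xXj /= -pmulrn natrM natrX.
by field; rewrite expf_neq0 // gt_eqF.
Qed.

Lemma fk1_ratioE k : (fk1 a n k.+1)%:~R / (fk1 a n k)%:~R =
  (1 + x) * (weighted_mass n x k.+1 / weighted_mass n x k).
Proof.
have Xk_neq0 : (1 + x) ^+ k != 0 by rewrite expf_neq0 // gt_eqF ?addr_gt0.
rewrite !fk1_weighted_mass exprS invfM.
transitivity ((1 + x) * (weighted_mass n x k.+1 / weighted_mass n x k) *
  ((1 + x) ^+ k / (1 + x) ^+ k)); first by ring.
by rewrite mulfV // mulr1.
Qed.

End Fk1.

Theorem lemma6p1 (R : realType) (a n : nat) (ha : (0 < a)%N) (hn : (0 < n)%N) :
  (fun k : nat => ((fk1 a n k.+1)%:~R / (fk1 a n k)%:~R : R) - 1) @ \oo -->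
    ((a%:R : R) `^ (n%:R^-1)).
Proof.
set x := _ `^ _.
have x_gt0 : 0 < x by rewrite powR_gt0 // ltr0n.
have xXn : x ^+ n = a%:R by rewrite exprn_powR_invn.
have L_gt0 : 0 < n%:R^-1 * \sum_(r < n) x ^- r.
  rewrite mulr_gt0 ?invr_gt0 ?ltr0n // (bigD1 (Ordinal hn)) //= expr0 invr1.
  by rewrite ltr_wpDr // sumr_ge0 // => r _; rewrite invr_ge0 exprn_ge0 // ltW.
have ratio_cvg := cvgn_ratio_succ (lt0r_neq0 L_gt0) (weighted_mass_cvg hn x_gt0).
rewrite (_ : (fun k => _) =
    fun k => (1 + x) * (weighted_mass n x k.+1 / weighted_mass n x k) - 1).
  rewrite [X in _ --> X](_ : x = (1 + x) * 1 - 1); last by rewrite mulr1 addrAC subrr add0r.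
  by apply: cvgB; [apply: cvgM; [apply: cvg_cst | apply: ratio_cvg] | apply: cvg_cst].
by apply: funext => k; rewrite (fk1_ratioE hn x_gt0 xXn).
Qed.
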